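(* Let $M$ be an $n\times n$ complex Hadamard matrix. Let $\Gamma$ be the group of all $n\times n$ complex monomial matrices $P$ with $PMP^\ast=M$, let $\pi\colon\Gamma\to\mathrm{Sym}_n$ send a monomial matrix to its underlying permutation, let $G=\pi(\Gamma)$, and assume $G$ is transitive. Let $\Gamma_{\rm f}=\{L\in\Gamma : \det(L)=1\}$. Then the restriction of $\pi$ to $\Gamma_{\rm f}$ is a surjection $\Gamma_{\rm f}\to G$ whose kernel is the cyclic central subgroup $\langle\zeta_nI_n\rangle$, where $\zeta_n$ is a primitive complex $n$-th root of unity; in particular $|\Gamma_{\rm f}|=n|G|$ is finite. Moreover, $M\in\mathrm{C}(\Gamma)$ and $\mathrm{C}(\Gamma)=\mathrm{C}(\Gamma_{\rm f})$.
   Context: A complex Hadamard matrix of order $n$ has all entries of norm $1$ and satisfies $MM^\ast=nI_n$. A monomial matrix has exactly one nonzero entry in each row and column; it factors as $PD$ with $P$ a permutation matrix and $D$ diagonal, and $\pi$ maps it to $P$. For a matrix group $K$, $\mathrm{C}(K)$ denotes the set of matrices commuting with every element of $K$. ($\Gamma$ is the projection onto the first coordinate of the strong automorphism group $\{(P,P) : PMP^\ast=M\}$ of $M$.) *)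

(* Complex numbers: an arbitrary numClosedFieldType C
   (algebraically closed field with conjugation and norm; C = complex numbers). *)
From mathcomp Require Import all_boot all_order all_algebra all_fingroup.
Set Implicit Arguments. Unset Strict Implicit. Unset Printing Implicit Defensive.
Import Order.TTheory GRing.Theory Num.Theory.
Local Open Scope ring_scope.

Section Defs.
Variables (C : numClosedFieldType) (n : nat).

Definition ctrmx (A : 'M[C]_n) : 'M[C]_n := (map_mx Num.conj A)^T.

Definition hadamard (M : 'M[C]_n) : Prop :=
  (forall i j, `|M i j| = 1) /\ M *m ctrmx M = (n%:R)%:M.

Definition monomial (P : 'M[C]_n) : Prop :=
  (forall i, #|[set j | P i j != 0]| = 1%N) /\
  (forall j, #|[set i | P i j != 0]| = 1%N).

(* pi(L) = s : L = perm_mx s *m D with D diagonal invertible,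
   i.e. L i j is nonzero exactly when s i = j *)
Definition underlying_perm (L : 'M[C]_n) (s : 'S_n) : Prop :=
  forall i j, (L i j != 0) = (s i == j).

Definition in_Gamma (M L : 'M[C]_n) : Prop :=
  monomial L /\ L *m M *m ctrmx L = M.

Definition in_Gammaf (M L : 'M[C]_n) : Prop :=
  in_Gamma M L /\ \det L = 1.

Definition in_centralizer (K : 'M[C]_n -> Prop) (X : 'M[C]_n) : Prop :=
  forall L, K L -> L *m X = X *m L.

End Defs.

(* Every L in Gamma is monomial, L = P D, and comparing the diagonals of
   L M L^* = M, where all entries of M have modulus one, shows that D is
   unitary; so Gamma is a group of unitary matrices commuting with M.
   Rescaling L by an n-th root of (det L)^-1 moves it into Gamma_f without
   changing pi(L): this gives surjectivity and C(Gamma) = C(Gamma_f).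
   A diagonal K in Gamma satisfies K_ii (K_jj)^* M_ij = M_ij, hence
   K_ii (K_jj)^* = 1 for all i, j, so K is scalar, and det K = 1 makes it an
   n-th root of unity. The fibres of pi on Gamma_f are thus cosets of this
   n-element kernel, whence |Gamma_f| = n |G|. *)

From mathcomp Require Import all_boot all_order all_algebra all_fingroup.
From mathcomp Require Import all_solvable all_field.
Import Order.TTheory GRing.Theory Num.Theory.
Local Open Scope ring_scope.
Set Implicit Arguments. Unset Strict Implicit. Unset Printing Implicit Defensive.

Lemma prim_root_exists (C : numClosedFieldType) (n : nat) :
  (0 < n)%N -> exists z : C, n.-primitive_root z.
Proof.
move=> n_gt0; have [r Dp] := closed_field_poly_normal ('X^n - 1 : {poly C}).
rewrite (monicP _) ?monicXnsubC // scale1r in Dp.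
have rn1 : all n.-unity_root r by apply/allP=> z; rewrite -root_prod_XsubC -Dp.
have sz_r : (n < (size r).+1)%N.
  by rewrite -(size_prod_XsubC r id) -Dp size_XnsubC.
have [|z] := hasP (has_prim_root n_gt0 rn1 _ sz_r); last by exists z.
by rewrite -separable_prod_XsubC -Dp separable_Xn_sub_1 // pnatr_eq0 -lt0n.
Qed.

Section ConjTranspose.
Variables (C : numClosedFieldType) (n : nat).
Implicit Types (A B : 'M[C]_n).

Lemma ctrmxE A i j : ctrmx A i j = (A j i)^*.
Proof. by rewrite !mxE. Qed.

Lemma ctrmxM A B : ctrmx (A *m B) = ctrmx B *m ctrmx A.
Proof. by rewrite /ctrmx map_mxM trmx_mul. Qed.

Lemma ctrmxZ a A : ctrmx (a *: A) = a^* *: ctrmx A.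
Proof. by rewrite /ctrmx map_mxZ linearZ. Qed.

Lemma ctrmx1 : ctrmx (1%:M : 'M[C]_n) = 1%:M.
Proof. by rewrite /ctrmx map_scalar_mx rmorph1 tr_scalar_mx. Qed.

Lemma ctrmxK A : ctrmx (ctrmx A) = A.
Proof. by apply/matrixP => i j; rewrite !ctrmxE conjCK. Qed.

Lemma det_ctrmx A : \det (ctrmx A) = (\det A)^*.
Proof. by rewrite det_tr det_map_mx. Qed.

End ConjTranspose.

Section UnderlyingPerm.
Variables (C : numClosedFieldType) (n : nat).
Implicit Types (A B L : 'M[C]_n) (s t : 'S_n).

Lemma underlying_perm_eq0 L s : underlying_perm L s ->
  forall i k, k != s i -> L i k = 0.
Proof. by move=> Ls i k; rewrite eq_sym -Ls negbK => /eqP. Qed.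

Lemma underlying_perm_inj L s t :
  underlying_perm L s -> underlying_perm L t -> s = t.
Proof. by move=> Ls Lt; apply/permP => i; apply/eqP; rewrite -Ls Lt. Qed.

Lemma underlying_perm_monomial L s : underlying_perm L s -> monomial L.
Proof.
move=> Ls; split=> [i|j]; apply/eqP/cards1P.
  by exists (s i); apply/setP => j; rewrite !inE Ls eq_sym.
by exists (s^-1 j)%g; apply/setP => i; rewrite !inE Ls (canF_eq (permK s)).
Qed.

Lemma monomial_underlying_perm L : monomial L -> exists s, underlying_perm L s.
Proof.
case=> rowL colL.
have /fin_all_exists [f Lf] i : exists j, [set k | L i k != 0] = [set j].
  exact/cards1P/eqP.
have Lf_nz i k : (L i k != 0) = (f i == k).
  by rewrite [f i == k]eq_sym -in_set1 -Lf inE.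
have f_inj : injective f.
  move=> i1 i2 f12; have /eqP/cards1P [i Li] := colL (f i1).
  have Li1 : i1 \in [set k | L k (f i1) != 0] by rewrite inE Lf_nz.
  have Li2 : i2 \in [set k | L k (f i1) != 0] by rewrite inE Lf_nz f12.
  by move: Li1 Li2; rewrite Li !in_set1 => /eqP -> /eqP ->.
by exists (perm f_inj) => i j; rewrite permE Lf_nz.
Qed.

Lemma mulmx_underlying_permE A s : underlying_perm A s ->
  forall B i j, (A *m B) i j = A i (s i) * B (s i) j.
Proof.
move=> As B i j; rewrite mxE (bigD1 (s i)) //= big1 ?addr0 // => k.
by move=> /(underlying_perm_eq0 As) ->; rewrite mul0r.
Qed.

Lemma mulmx_ctrmx_underlying_permE L s : underlying_perm L s ->
  forall A i j, (A *m ctrmx L) i j = A i (s j) * (L j (s j))^*.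
Proof.
move=> Ls A i j; rewrite mxE (bigD1 (s j)) //= big1 ?addr0 ?ctrmxE // => k.
by move=> /(underlying_perm_eq0 Ls) Ljk; rewrite ctrmxE Ljk conjC0 mulr0.
Qed.

Lemma underlying_perm_conjE L s : underlying_perm L s ->
  forall A i j,
  (L *m A *m ctrmx L) i j = L i (s i) * A (s i) (s j) * (L j (s j))^*.
Proof.
move=> Ls A i j.
by rewrite (mulmx_ctrmx_underlying_permE Ls) (mulmx_underlying_permE Ls).
Qed.

Lemma underlying_perm_mulmx A B s t :
  underlying_perm A s -> underlying_perm B t -> underlying_perm (A *m B) (s * t).
Proof.
move=> As Bt i j.
by rewrite (mulmx_underlying_permE As) mulf_eq0 negb_or As eqxx Bt permM.
Qed.

Lemma underlying_perm_ctrmx L s :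
  underlying_perm L s -> underlying_perm (ctrmx L) s^-1.
Proof.
by move=> Ls i j; rewrite ctrmxE conjC_eq0 Ls (canF_eq (permK s)) eq_sym.
Qed.

Lemma underlying_permZ a L s :
  a != 0 -> underlying_perm L s -> underlying_perm (a *: L) s.
Proof. by move=> a_nz Ls i j; rewrite mxE mulf_eq0 (negbTE a_nz) Ls. Qed.

Lemma underlying_perm1 : underlying_perm (1%:M : 'M[C]_n) 1.
Proof. by move=> i j; rewrite mxE perm1 pnatr_eq0 eqb0 negbK. Qed.

End UnderlyingPerm.

Lemma unimodular_neq0 (R : numDomainType) (x : R) : `|x| = 1 -> x != 0.
Proof. by move=> x1; rewrite -normr_eq0 x1 oner_eq0. Qed.

Lemma norm_unity_root (R : numDomainType) (n : nat) (x : R) :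
  (0 < n)%N -> x ^+ n = 1 -> `|x| = 1.
Proof.
by move=> n_gt0 xn1; apply/eqP; rewrite -(pexpr_eq1 n_gt0) // -normrX xn1 normr1.
Qed.

Section Gamma.
Variables (C : numClosedFieldType) (n : nat) (M : 'M[C]_n).
Hypothesis M_unimodular : forall i j, `|M i j| = 1.
Implicit Types (A B K L : 'M[C]_n) (s : 'S_n).

Lemma Gamma_entry_norm1 L s i :
  in_Gamma M L -> underlying_perm L s -> `|L i (s i)| = 1.
Proof.
move=> [_ LML] Ls; have := congr1 (fun A => `|A i i|) LML.
rewrite /= (underlying_perm_conjE Ls) !normrM !M_unimodular mulr1.
by rewrite norm_conjC -expr2 => /eqP; rewrite pexpr_eq1 // => /eqP.
Qed.

Lemma Gamma_unitary L : in_Gamma M L -> L *m ctrmx L = 1%:M.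
Proof.
move=> GL; have [s Ls] := monomial_underlying_perm GL.1.
have -> : L *m ctrmx L = L *m 1%:M *m ctrmx L by rewrite mulmx1.
apply/matrixP => i j; rewrite (underlying_perm_conjE Ls) !mxE.
rewrite (inj_eq perm_inj); case: eqP => [<- | _]; last by rewrite mulr0 mul0r.
by rewrite mulr1 -normCK (Gamma_entry_norm1 _ GL Ls) expr1n.
Qed.

Lemma Gamma_unitary_r L : in_Gamma M L -> ctrmx L *m L = 1%:M.
Proof. by move/Gamma_unitary/mulmx1C. Qed.

Lemma Gamma_comm L : in_Gamma M L -> L *m M = M *m L.
Proof. by move=> GL; rewrite -{2}GL.2 -!mulmxA Gamma_unitary_r // mulmx1. Qed.

Lemma Gamma1 : in_Gamma M 1%:M.
Proof.
split; first exact: (underlying_perm_monomial (@underlying_perm1 C n)).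
by rewrite ctrmx1 mul1mx mulmx1.
Qed.

Lemma Gamma_mul A B : in_Gamma M A -> in_Gamma M B -> in_Gamma M (A *m B).
Proof.
move=> [mA AMA] [mB BMB].
have [s As] := monomial_underlying_perm mA.
have [t Bt] := monomial_underlying_perm mB.
split; first exact: underlying_perm_monomial (underlying_perm_mulmx As Bt).
have -> : A *m B *m M *m ctrmx (A *m B) = A *m (B *m M *m ctrmx B) *m ctrmx A.
  by rewrite ctrmxM !mulmxA.
by rewrite BMB.
Qed.

Lemma Gamma_ctrmx L : in_Gamma M L -> in_Gamma M (ctrmx L).
Proof.
move=> GL; have [s Ls] := monomial_underlying_perm GL.1.
split; first exact: underlying_perm_monomial (underlying_perm_ctrmx Ls).
by rewrite ctrmxK -mulmxA -Gamma_comm // mulmxA Gamma_unitary_r // mul1mx.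
Qed.

Lemma GammaZ t L : `|t| = 1 -> in_Gamma M L -> in_Gamma M (t *: L).
Proof.
move=> t1 [mL LML]; have [s Ls] := monomial_underlying_perm mL.
have tL := underlying_permZ (unimodular_neq0 t1) Ls.
split; first exact: underlying_perm_monomial tL.
by rewrite ctrmxZ -!scalemxAl -scalemxAr scalerA -normCK t1 expr1n scale1r.
Qed.

Lemma Gammaf1 : in_Gammaf M 1%:M.
Proof. by split; [exact: Gamma1 | exact: det1]. Qed.

Lemma Gammaf_mul A B : in_Gammaf M A -> in_Gammaf M B -> in_Gammaf M (A *m B).
Proof.
move=> [GA detA] [GB detB].
by split; [exact: Gamma_mul | rewrite det_mulmx detA detB mulr1].
Qed.

Lemma Gammaf_ctrmx L : in_Gammaf M L -> in_Gammaf M (ctrmx L).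
Proof.
by move=> [GL detL]; split; [exact: Gamma_ctrmx | rewrite det_ctrmx detL conjC1].
Qed.

Lemma Gamma_ker_scalar K i :
  in_Gamma M K -> underlying_perm K 1 -> K = (K i i)%:M.
Proof.
move=> [_ KMK] K1.
have Kconj j k : K j j * (K k k)^* = 1.
  have := congr1 (fun A => A j k) KMK.
  rewrite /= (underlying_perm_conjE K1) !perm1 mulrAC -[RHS]mul1r.
  exact/mulIf/unimodular_neq0.
apply/matrixP => j k; rewrite mxE; have [<- | jk] := eqVneq j k.
  have /(congr1 (fun x => x != 0)) := Kconj i i.
  rewrite oner_eq0 mulf_eq0 negb_or => /andP [_ Kii_nz].
  by rewrite mulr1n; apply: (mulIf Kii_nz); rewrite !Kconj.
by rewrite mulr0n (underlying_perm_eq0 K1) // perm1 eq_sym.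
Qed.

Hypothesis n_gt0 : (0 < n)%N.

Lemma GammafZ t L : t ^+ n = 1 -> in_Gammaf M L -> in_Gammaf M (t *: L).
Proof.
move=> tn1 [GL detL]; split; first exact: GammaZ (norm_unity_root n_gt0 tn1) GL.
by rewrite detZ tn1 detL mulr1.
Qed.

Lemma Gamma_normalize L :
  in_Gamma M L -> exists2 mu, `|mu| = 1 & in_Gammaf M (mu *: L).
Proof.
move=> GL; have detL1 : `|\det L| = 1.
  have := congr1 determinant (Gamma_unitary GL).
  rewrite det_mulmx det_ctrmx det1 -normCK => /eqP.
  by rewrite pexpr_eq1 // => /eqP.
pose mu := n.-root (\det L)^-1.
have mu1 : `|mu| = 1 by rewrite norm_rootC normfV detL1 invr1 rootC1.
exists mu => //; split; first exact: GammaZ.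
by rewrite detZ rootCK // mulVf // unimodular_neq0.
Qed.

Lemma Gammaf_ker K : in_Gammaf M K -> underlying_perm K 1 ->
  exists2 d, d ^+ n = 1 & K = d%:M.
Proof.
move=> [GK detK] K1; have /(Gamma_ker_scalar (Ordinal n_gt0) GK) DK := K1.
by exists (K (Ordinal n_gt0) (Ordinal n_gt0)); rewrite // -det_scalar -DK.
Qed.

Lemma Gammaf_fibre L1 L2 s : in_Gammaf M L1 -> in_Gammaf M L2 ->
  underlying_perm L1 s -> underlying_perm L2 s ->
  exists2 d, d ^+ n = 1 & L2 = d *: L1.
Proof.
move=> GL1 GL2 L1s L2s.
have K1 : underlying_perm (L2 *m ctrmx L1) 1.
  rewrite -(mulgV s).
  exact: underlying_perm_mulmx L2s (underlying_perm_ctrmx L1s).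
have [d dn1 Dd] := Gammaf_ker (Gammaf_mul GL2 (Gammaf_ctrmx GL1)) K1.
exists d => //; rewrite -mul_scalar_mx -Dd -mulmxA Gamma_unitary_r ?mulmx1 //.
exact: GL1.1.
Qed.

Lemma Gammaf_kerE zeta : n.-primitive_root zeta -> forall L,
  (in_Gammaf M L /\ underlying_perm L 1) <->
  exists2 k : nat, (k < n)%N & L = zeta ^+ k *: 1%:M.
Proof.
move=> zeta_prim L; split=> [[GL L1] | [k _ ->]].
  have [d /(prim_rootP zeta_prim) [k ->] ->] := Gammaf_ker GL L1.
  by exists k; rewrite ?ltn_ord ?scalemx1.
have zk_n1 : (zeta ^+ k) ^+ n = 1.
  by rewrite exprAC (prim_expr_order zeta_prim) expr1n.
have zk_nz := unimodular_neq0 (norm_unity_root n_gt0 zk_n1).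
split; first exact: GammafZ zk_n1 Gammaf1.
exact: underlying_permZ zk_nz (@underlying_perm1 C n).
Qed.

Lemma centralizer_Gamma_Gammaf X :
  in_centralizer (in_Gamma M) X <-> in_centralizer (in_Gammaf M) X.
Proof.
split=> [XC L [GL _] | XCf L GL]; first exact: XC.
have [mu mu1 GmuL] := Gamma_normalize GL.
by apply: (scalerI (unimodular_neq0 mu1)); rewrite scalemxAl scalemxAr XCf.
Qed.

Variable G : {set 'S_n}.
Hypothesis G_def :
  forall s, s \in G <-> exists2 L, in_Gamma M L & underlying_perm L s.

Lemma Gammaf_onto s :
  s \in G -> exists2 L, in_Gammaf M L & underlying_perm L s.
Proof.
move=> /G_def [L GL Ls]; have [mu mu1 GmuL] := Gamma_normalize GL.
by exists (mu *: L) => //; exact: underlying_permZ (unimodular_neq0 mu1) Ls.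
Qed.

Section Enumeration.
Variables (zeta : C) (Lf : 'S_n -> 'M[C]_n).
Hypothesis zeta_prim : n.-primitive_root zeta.
Hypothesis Lf_fibre :
  forall s, s \in G -> in_Gammaf M (Lf s) /\ underlying_perm (Lf s) s.

Definition Gammaf_seq :=
  [seq zeta ^+ k *: Lf s | s <- enum G, k <- iota 0 n].

Lemma Gammaf_seq_uniq : uniq Gammaf_seq.
Proof.
have zeta_nz k : zeta ^+ k != 0.
  rewrite expf_neq0 // unimodular_neq0 //.
  exact: norm_unity_root n_gt0 (prim_expr_order zeta_prim).
apply: allpairs_uniq; [exact: enum_uniq | exact: iota_uniq |].
move=> _ _ /allpairsP [[s k] [/= sG kn ->]] /allpairsP [[t l] [/= tG ln ->]] /= E.
rewrite !mem_enum in sG tG; rewrite !mem_iota in kn ln.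
have [_ Ls] := Lf_fibre sG; have [_ Lt] := Lf_fibre tG.
have st : s = t.
  apply: (underlying_perm_inj (underlying_permZ (zeta_nz k) Ls)).
  by rewrite E; exact: underlying_permZ (zeta_nz l) Lt.
subst t; pose i0 := Ordinal n_gt0.
have Ls_nz : Lf s i0 (s i0) != 0 by rewrite Ls.
have /(congr1 (fun A => A i0 (s i0))) := E; rewrite !mxE.
move/(mulIf Ls_nz)/eqP; rewrite (eq_prim_root_expr zeta_prim).
by rewrite !modn_small // => /eqP ->.
Qed.

Lemma mem_Gammaf_seq L : L \in Gammaf_seq <-> in_Gammaf M L.
Proof.
split=> [/allpairsP [[s k] [/= sG _ ->]] | GL].
  rewrite mem_enum in sG; have [GLs _] := Lf_fibre sG.
  by apply: GammafZ GLs; rewrite exprAC (prim_expr_order zeta_prim) expr1n.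
have [s Ls] := monomial_underlying_perm GL.1.1.
have sG : s \in G by apply/G_def; exists L; [exact: GL.1 | exact: Ls].
have [GLs Lss] := Lf_fibre sG.
have [_ /(prim_rootP zeta_prim) [k ->] ->] := Gammaf_fibre GLs GL Lss Ls.
by apply/allpairsP; exists (s, val k); rewrite /= mem_enum mem_iota ltn_ord.
Qed.

End Enumeration.

Lemma Gammaf_card : exists r : seq 'M[C]_n,
  [/\ uniq r, forall L, L \in r <-> in_Gammaf M L & size r = (n * #|G|)%N].
Proof.
have [zeta zeta_prim] := prim_root_exists C n_gt0.
have /fin_all_exists [Lf Lf_fibre] s :
    exists L, s \in G -> in_Gammaf M L /\ underlying_perm L s.
  have [/Gammaf_onto [L GL Ls] | sNG] := boolP (s \in G); first by exists L.
  by exists 0 => sG; case/negP: sNG.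
exists (Gammaf_seq zeta Lf); split.
- exact: Gammaf_seq_uniq.
- exact: mem_Gammaf_seq.
by rewrite size_allpairs size_iota cardE mulnC.
Qed.

End Gamma.

Theorem proposition6p1 (C : numClosedFieldType) (n : nat) (M : 'M[C]_n)
    (G : {set 'S_n}) :
  (0 < n)%N ->
  hadamard M ->
  (* G = pi(Gamma) *)
  (forall s : 'S_n, s \in G <-> exists2 L, in_Gamma M L & underlying_perm L s) ->
  [transitive G, on [set: 'I_n] | 'P] ->
  [/\ (* pi restricted to Gamma_f is onto G *)
      (forall s, s \in G -> exists2 L, in_Gammaf M L & underlying_perm L s),
      (* its kernel is <zeta_n I_n> *)
      (forall zeta : C, n.-primitive_root zeta ->
         forall L : 'M[C]_n,
           (in_Gammaf M L /\ underlying_perm L 1%g) <->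
           exists2 k : nat, (k < n)%N & L = zeta ^+ k *: 1%:M),
      (* |Gamma_f| = n |G|, finite *)
      (exists s : seq 'M[C]_n,
         [/\ uniq s, (forall L, L \in s <-> in_Gammaf M L) & size s = (n * #|G|)%N]),
      (* M in C(Gamma) *)
      in_centralizer (in_Gamma M) M
    & (* C(Gamma) = C(Gamma_f) *)
      (forall X : 'M[C]_n,
         in_centralizer (in_Gamma M) X <-> in_centralizer (in_Gammaf M) X)].
Proof.
move=> n_gt0 [M_unimodular _] G_def _; split.
- exact: Gammaf_onto.
- exact: Gammaf_kerE.
- exact: Gammaf_card.
- by move=> L /(Gamma_comm M_unimodular).
- exact: centralizer_Gamma_Gammaf.
Qed.
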